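(* Let $\mathcal D=\{d_1,\dots,d_s\}$ and $\mathcal H=\{h_1,\dots,h_n\}$ be finite sets, where each hypothesis $h_i$ is a probability distribution $\mathbb P[\cdot\mid h_i]$ on $\mathcal D$, the hypotheses are pairwise distinct as distributions, and the prior $\bm p=(p_1,\dots,p_n)$ on $\mathcal H$ has all $p_i>0$. Consider chained iterated learning with initial hypothesis $\bm h_{\mathrm{init}}=h_1$. Then there is a constant $C>0$ independent of $t,\delta,\varepsilon$ such that for any $0<\delta,\varepsilon<1$, the sample size sequence $$m_t=\frac{8sn^2}{\delta^2}\Bigl(\ln\frac{t}{\varepsilon}+C\Bigr)$$ makes iterated learning $(\delta,\varepsilon)$-self-sustaining: for every $t\ge1$, a random hypothesis $h$ drawn from the posterior $\bm h^t$ of learner $t$ satisfies $d_{TV}(\mathbb P[\cdot\mid h],\mathbb P[\cdot\mid h_1])\le\delta$ with probability at least $1-\varepsilon$.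
   Context: $d_{TV}$ is the total variation distance (half the $\ell_1$-norm of the difference) between distributions on $\mathcal D$. Chained iterated learning: for $\mathbf d=(x_1,\dots,x_m)\in\mathcal D^m$ let $\mathbb P[\mathbf d\mid h]=\prod_{k=1}^m\mathbb P[x_k\mid h]$ and Bayesian posterior $\mathbb P[h_j\mid\mathbf d]=\mathbb P[\mathbf d\mid h_j]p_j/\sum_{k=1}^n\mathbb P[\mathbf d\mid h_k]p_k$. Learner $t\ge1$ picks a hypothesis $h_i$ from the posterior of learner $t-1$ (for $t=1$, from $\bm h_{\mathrm{init}}$), draws $m_t$ i.i.d. samples $\mathbf d\in\mathcal D^{m_t}$ from $h_i$, and forms the posterior $\mathbb P[\cdot\mid\mathbf d]$. The transition probabilities are $P^{|t}_{ij}=\sum_{\mathbf d\in\mathcal D^{m_t}}\mathbb P[h_j\mid\mathbf d]\,\mathbb P[\mathbf d\mid h_i]$, and the (marginal) posterior of learner $t$ is the row vector $\bm h^t=\bm h^{t-1}P^{|t}$ with $\bm h^0=(1,0,\dots,0)$. *)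

From HB Require Import structures.
From mathcomp Require Import all_boot all_order all_algebra.
From mathcomp Require Import all_classical all_reals all_analysis.
Set Implicit Arguments. Unset Strict Implicit. Unset Printing Implicit Defensive.
Import Order.TTheory GRing.Theory Num.Theory.
Local Open Scope ring_scope.

Section IL.
Variables (R : realType) (n s : nat).
(* L i x = P[x | h_i], hypotheses H = 'I_n, data D = 'I_s *)
Variable L : 'I_n -> 'I_s -> R.
Variable p : 'I_n -> R.

Definition lik (m : nat) (d : m.-tuple 'I_s) (h : 'I_n) : R :=
  \prod_(k < m) L h (tnth d k).

Definition posterior (m : nat) (d : m.-tuple 'I_s) (j : 'I_n) : R :=
  lik d j * p j / \sum_(k < n) lik d k * p k.

Definition trans (m : nat) (i j : 'I_n) : R :=
  \sum_(d : m.-tuple 'I_s) posterior d j * lik d i.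

(* marginal posterior h^t of learner t, for sample sizes msz t (t >= 1);
   h^0 = indicator of the initial hypothesis h0 *)
Fixpoint hpost (h0 : 'I_n) (msz : nat -> nat) (t : nat) : 'I_n -> R :=
  match t with
  | 0 => fun i => if i == h0 then 1 else 0
  | t'.+1 => fun j => \sum_(i < n) hpost h0 msz t' i * trans (msz t) i j
  end.

Definition dTV (i j : 'I_n) : R :=
  2^-1 * \sum_(x < s) `|L i x - L j x|.

End IL.

Definition sample_size (R : realType) (n s : nat) (C delta eps : R) (t : nat) : nat :=
  `|Num.ceil ((8 * s%:R * (n%:R) ^+ 2 / delta ^+ 2) * (ln (t%:R / eps) + C))|%N.

(* Let A be the set of hypotheses reachable from h_1 by steps of total
   variation distance < delta / n: every member of A is delta-close to h_1,
   and any transition leaving A jumps a distance d >= delta / n.  The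
   probability of the jump i -> j is at most BC(i, j)^m / p_i, where the
   Bhattacharyya coefficient satisfies BC^2 <= 1 - d^2 by Cauchy-Schwarz,
   hence at most exp (- m d^2 / 2) / p_i.  With the sample size m_t this is
   O(eps^2 / t^2), so the total mass that ever leaves A is at most eps. *)

From mathcomp Require Import all_boot all_order all_algebra.
From mathcomp Require Import all_classical all_reals all_analysis.
From mathcomp Require Import ring lra.
Import Order.TTheory GRing.Theory Num.Theory.
Set Implicit Arguments. Unset Strict Implicit.
Local Open Scope ring_scope.

Lemma sum_mul_sqr_le (R : realFieldType) (I : finType) (x y : I -> R) :
  (\sum_i x i * y i) ^+ 2 <= (\sum_i x i ^+ 2) * (\sum_i y i ^+ 2).
Proof.
set S := \sum_i x i * y i; set X := \sum_i x i ^+ 2; set Y := \sum_i y i ^+ 2.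
have Y0 : 0 <= Y by apply: sumr_ge0 => i _; exact: sqr_ge0.
have [Yeq0 | Y_neq0] := eqVneq Y 0.
  have y0 i : y i = 0.
    apply/eqP; rewrite -sqrf_eq0; apply/eqP.
    by apply: (psumr_eq0P _ Yeq0) => // k _; exact: sqr_ge0.
  by rewrite /S big1 ?expr0n ?Yeq0 ?mulr0 // => i _; rewrite y0 mulr0.
have expand i : (Y * x i - S * y i) ^+ 2 =
    Y ^+ 2 * x i ^+ 2 - (2 * Y * S) * (x i * y i) + S ^+ 2 * y i ^+ 2 by ring.
have : 0 <= \sum_i (Y * x i - S * y i) ^+ 2 by apply: sumr_ge0 => i _; exact: sqr_ge0.
under eq_bigr do rewrite expand.
rewrite big_split sumrB /= -!mulr_sumr -/X -/Y -/S.
have -> : Y ^+ 2 * X - 2 * Y * S * S + S ^+ 2 * Y = Y * (X * Y - S ^+ 2) by ring.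
by rewrite pmulr_rge0 ?lt_def ?Y_neq0 // subr_ge0.
Qed.

Lemma bhattacharyya_sqr_le (R : rcfType) (I : finType) (a b : I -> R) :
  (forall x, 0 <= a x) -> (forall x, 0 <= b x) ->
  \sum_x a x = 1 -> \sum_x b x = 1 ->
  (\sum_x Num.sqrt (a x) * Num.sqrt (b x)) ^+ 2 <=
    1 - (2^-1 * \sum_x `|a x - b x|) ^+ 2.
Proof.
move=> a0 b0 a1 b1.
set f := fun x => Num.sqrt (a x); set g := fun x => Num.sqrt (b x).
set beta := \sum_x f x * g x.
have fa x : f x ^+ 2 = a x by rewrite sqr_sqrtr.
have gb x : g x ^+ 2 = b x by rewrite sqr_sqrtr.
have fg0 x : 0 <= f x + g x by rewrite addr_ge0 ?sqrtr_ge0.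
(* [|a - b| = |f - g| (f + g)] and Cauchy-Schwarz *)
have E1 : \sum_x `|a x - b x| = \sum_x `|f x - g x| * (f x + g x).
  apply: eq_bigr => x _; rewrite -fa -gb -[f x + g x](ger0_norm (fg0 x)) -normrM.
  by congr `|_|; ring.
have E2 : \sum_x `|f x - g x| ^+ 2 = 2 - 2 * beta.
  under eq_bigr do rewrite real_normK ?num_real // sqrrB fa gb.
  by rewrite big_split sumrB /= a1 b1 sumrMnl -/beta -mulr_natl; lra.
have E3 : \sum_x (f x + g x) ^+ 2 = 2 + 2 * beta.
  under eq_bigr do rewrite sqrrD fa gb.
  by rewrite !big_split /= a1 b1 -/beta; lra.
have := sum_mul_sqr_le (fun x => `|f x - g x|) (fun x => f x + g x).
rewrite /= E2 E3 -E1; lra.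
Qed.

Lemma expn_le_expR_sqr (R : realType) (beta g : R) (m : nat) :
  0 <= beta -> beta ^+ 2 <= 1 - g ^+ 2 -> beta ^+ m <= expR (- (m%:R * g ^+ 2 / 2)).
Proof.
move=> beta0 beta_le.
have g2_le1 : 0 <= 1 - g ^+ 2 by apply: le_trans beta_le; exact: sqr_ge0.
rewrite -(@ler_pXn2r _ 2) ?nnegrE ?exprn_ge0 ?expR_ge0 // -!exprM mulnC exprM.
apply: (le_trans (lerXn2r m _ _ beta_le)); rewrite ?nnegrE ?exprn_ge0 //.
apply: (@le_trans _ _ (expR (- g ^+ 2) ^+ m)).
  by apply: lerXn2r; rewrite ?nnegrE ?expR_ge0 //; exact: expR_ge1Dx.
by rewrite -!expRM_natl ler_expR; lra.
Qed.

Lemma mul_div_le_sqrt (R : rcfType) (x y D : R) :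
  0 <= x <= D -> 0 <= y <= D -> x * y / D <= Num.sqrt (x * y).
Proof.
move=> /andP[x0 xD] /andP[y0 yD].
have xy0 : 0 <= x * y by exact: mulr_ge0.
have [-> | D_neq0] := eqVneq D 0; first by rewrite invr0 mulr0 sqrtr_ge0.
have D_gt0 : 0 < D by rewrite lt_def D_neq0 (le_trans x0 xD).
rewrite ler_pdivrMr // -{1}(sqr_sqrtr xy0) expr2 ler_wpM2l ?sqrtr_ge0 //.
by rewrite -(ger0_norm (ltW D_gt0)) -sqrtr_sqr ler_sqrt ?sqr_ge0 // expr2 ler_pM.
Qed.

Lemma sum_prod_tnth (R : comPzSemiRingType) (I : finType) (m : nat) (f : I -> R) :
  \sum_(d : m.-tuple I) \prod_(k < m) f (tnth d k) = (\sum_x f x) ^+ m.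
Proof.
rewrite -[in RHS](card_ord m) -prodr_const bigA_distr_bigA /=.
rewrite (reindex (fun d : m.-tuple I => [ffun k => tnth d k])) /=.
  by apply: eq_bigr => d _; apply: eq_bigr => k _; rewrite ffunE.
exists (fun g : {ffun 'I_m -> I} => [tuple g k | k < m]) => [d _ | g _].
  by apply: eq_from_tnth => k; rewrite tnth_mktuple ffunE.
by apply/ffunP => k; rewrite ffunE tnth_mktuple.
Qed.

Lemma sum_inv_sqr_le (R : realFieldType) (t : nat) :
  \sum_(u < t) ((u.+1)%:R ^+ 2)^-1 <= 2 :> R.
Proof.
suff : \sum_(u < t) ((u.+1)%:R ^+ 2)^-1 <= 2 - 2 / (t.+1)%:R :> R.
  by move/le_trans; apply; rewrite gerBl divr_ge0.
elim: t => [|t IH]; first by rewrite big_ord0 divr1 subrr.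
rewrite big_ord_recr /= -[(t.+2)%:R]natr1; apply: le_trans (lerD IH (lexx _)) _.
have x1 : 1 <= (t.+1)%:R :> R by rewrite ler1n.
move: (t.+1)%:R x1 => x x1.
rewrite -subr_ge0 (_ : _ - _ = (x - 1) / (x ^+ 2 * (x + 1))); last by field; lra.
by rewrite divr_ge0 ?mulr_ge0 ?sqr_ge0 //; lra.
Qed.

Lemma sumr_pred_le (R : numDomainType) (I : finType) (P : pred I) (F : I -> R) :
  (forall i, 0 <= F i) -> \sum_(i | P i) F i <= \sum_i F i.
Proof. by move=> F0; rewrite [leRHS](bigID P) /= lerDl sumr_ge0. Qed.

Section IteratedLearning.
Variables (R : realType) (n s : nat) (L : 'I_n -> 'I_s -> R) (p : 'I_n -> R).
Hypotheses (L_ge0 : forall i x, 0 <= L i x) (L_sum1 : forall i, \sum_x L i x = 1).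
Hypotheses (p_gt0 : forall i, 0 < p i) (p_sum1 : \sum_i p i = 1).

Lemma prior_le1 i : p i <= 1.
Proof. by rewrite -p_sum1 (bigD1 i) //= lerDl sumr_ge0 // => k _; exact: ltW. Qed.

Lemma lik_ge0 m (d : m.-tuple 'I_s) i : 0 <= lik L d i.
Proof. exact: prodr_ge0. Qed.

Lemma lik_le_evidence m (d : m.-tuple 'I_s) i :
  lik L d i * p i <= \sum_k lik L d k * p k.
Proof.
rewrite (bigD1 i) //= lerDl sumr_ge0 // => k _.
by rewrite mulr_ge0 ?lik_ge0 ?ltW.
Qed.

Lemma posterior_ge0 m (d : m.-tuple 'I_s) j : 0 <= posterior L p d j.
Proof.
have term_ge0 k : 0 <= lik L d k * p k by rewrite mulr_ge0 ?lik_ge0 ?ltW.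
by rewrite divr_ge0 // sumr_ge0.
Qed.

Lemma trans_ge0 m i j : 0 <= trans L p m i j.
Proof. by apply: sumr_ge0 => d _; rewrite mulr_ge0 ?posterior_ge0 ?lik_ge0. Qed.

Lemma sum_trans m i : \sum_j trans L p m i j = 1.
Proof.
rewrite exchange_big /= -(expr1n _ m) -(L_sum1 i) -sum_prod_tnth.
apply: eq_bigr => d _; rewrite -mulr_suml -/(lik L d i).
set D := \sum_k lik L d k * p k.
have -> : \sum_j posterior L p d j = D / D by rewrite -mulr_suml.
have [D0 | D_neq0] := eqVneq D 0; last by rewrite divff ?mul1r.
(* a null evidence makes every posterior the junk value [0 / 0 = 0], but also
   forces [lik L d i = 0] *)
have : lik L d i * p i <= 0 by rewrite -D0 lik_le_evidence.
rewrite pmulr_lle0 // => lik_le0.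
by apply/eqP; rewrite D0 !mul0r eq_sym eq_le lik_le0 lik_ge0.
Qed.

Lemma trans_le_bhattacharyya m i j :
  trans L p m i j <= (p i)^-1 * (\sum_x Num.sqrt (L i x) * Num.sqrt (L j x)) ^+ m.
Proof.
rewrite -sum_prod_tnth mulr_sumr; apply: ler_sum => d _; rewrite big_split /=.
set u := \prod_(k < m) _; set v := \prod_(k < m) _.
have uv0 : 0 <= u * v by rewrite mulr_ge0 // prodr_ge0 // => k _; exact: sqrtr_ge0.
have lik_sqr h : lik L d h = (\prod_(k < m) Num.sqrt (L h (tnth d k))) ^+ 2.
  by rewrite -prodrXl; apply: eq_bigr => k _; rewrite sqr_sqrtr.
set D := \sum_k lik L d k * p k.
(* both [lik L d i * p i] and [lik L d j * p j] are at most the evidence [D] *)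
have -> : posterior L p d j * lik L d i =
    (p i)^-1 * ((lik L d i * p i) * (lik L d j * p j) / D).
  by rewrite -[lik L d i in LHS](mulfK (lt0r_neq0 (p_gt0 i))) /posterior -/D; ring.
apply: ler_wpM2l; first by rewrite invr_ge0 ltW.
have term_ge0 h : 0 <= lik L d h * p h by rewrite mulr_ge0 ?lik_ge0 ?ltW.
apply: le_trans (mul_div_le_sqrt _ _) _; rewrite ?term_ge0 ?lik_le_evidence //.
rewrite !lik_sqr -/u -/v.
rewrite (_ : u ^+ 2 * p i * _ = (u * v) ^+ 2 * (p i * p j)); last by ring.
rewrite sqrtrM ?sqr_ge0 // sqrtr_sqr ger0_norm // ler_piMr ?sqrtr_ge0 //.
by rewrite -sqrtr1 ler_sqrt // mulr_ile1 ?prior_le1 ?ltW.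
Qed.

Lemma hpost_ge0 h0 msz t i : 0 <= hpost L p h0 msz t i.
Proof.
elim: t i => [|t IH] i /=; first by case: eqP.
by apply: sumr_ge0 => k _; rewrite mulr_ge0 ?trans_ge0.
Qed.

Lemma sum_hpost h0 msz t : \sum_i hpost L p h0 msz t i = 1.
Proof.
elim: t => [|t IH] /=.
  by rewrite (bigD1 h0) //= eqxx big1 ?addr0 // => i /negbTE ->.
by rewrite exchange_big /= -IH; apply: eq_bigr => i _; rewrite -mulr_sumr sum_trans mulr1.
Qed.

Lemma hpost_out_le (A : {set 'I_n}) h0 msz (c : nat -> R) t : h0 \in A ->
    (forall u i, i \in A -> \sum_(j | j \notin A) trans L p (msz u.+1) i j <= c u) ->
  \sum_(j | j \notin A) hpost L p h0 msz t j <= \sum_(u < t) c u.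
Proof.
move=> h0A leak; elim: t => [|t IH].
  by rewrite big_ord0 big1 //= => j; case: eqP => // ->; rewrite h0A.
have c_ge0 : 0 <= c t.
  by apply: le_trans (leak _ _ h0A); apply: sumr_ge0 => j _; exact: trans_ge0.
rewrite big_ord_recr /= exchange_big /=.
under eq_bigr do rewrite -mulr_sumr.
rewrite (bigID (fun i => i \in A)) /= addrC; apply: lerD.
  apply: le_trans IH; apply: ler_sum => i _; apply: ler_piMr; first exact: hpost_ge0.
  by rewrite -(sum_trans (msz t.+1) i) sumr_pred_le // => j; exact: trans_ge0.
apply: (@le_trans _ _ (\sum_(i in A) hpost L p h0 msz t i * c t)).
  by apply: ler_sum => i iA; rewrite ler_wpM2l ?hpost_ge0 ?leak.
rewrite -mulr_suml ler_piMl // -(sum_hpost h0 msz t) sumr_pred_le //.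
exact: hpost_ge0.
Qed.

Lemma hpost_mass_ge (A : {set 'I_n}) (P : pred 'I_n) h0 msz (c : nat -> R) t :
    h0 \in A -> (forall i, i \in A -> P i) ->
    (forall u i, i \in A -> \sum_(j | j \notin A) trans L p (msz u.+1) i j <= c u) ->
  1 - \sum_(u < t) c u <= \sum_(i | P i) hpost L p h0 msz t i.
Proof.
move=> h0A AP leak; rewrite lerBlDr -(sum_hpost h0 msz t) (bigID (mem A)) /=.
rewrite lerD ?hpost_out_le // big_mkcond [leRHS]big_mkcond /=.
apply: ler_sum => i _; case: ifP => [/AP -> // | _].
by case: ifP => // _; exact: hpost_ge0.
Qed.

Lemma dTV_ge0 i j : 0 <= dTV L i j.
Proof. by rewrite mulr_ge0 ?invr_ge0 // sumr_ge0. Qed.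

Lemma dTVC i j : dTV L i j = dTV L j i.
Proof. by congr (_ * _); apply: eq_bigr => x _; rewrite distrC. Qed.

Lemma dTV_triangle i j k : dTV L i k <= dTV L i j + dTV L j k.
Proof.
rewrite -mulrDr ler_wpM2l ?invr_ge0 // -big_split ler_sum // => x _.
exact: ler_distD.
Qed.

Definition dTV_near (g : R) : rel 'I_n := fun i j => dTV L i j < g.

Definition dTV_component (g : R) (h : 'I_n) : {set 'I_n} :=
  [set j | connect (dTV_near g) h j].

Lemma dTV_path_le g i q :
  path (dTV_near g) i q -> dTV L i (last i q) <= (size q)%:R * g.
Proof.
elim: q i => [|j q IH] i /=.
  by rewrite mul0r /dTV big1 ?mulr0 // => x _; rewrite subrr normr0.
move=> /andP[near_ij /IH le_jq]; rewrite -natr1 mulrDl mul1r addrC.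
by apply: le_trans (dTV_triangle i j _) _; rewrite lerD // ltW.
Qed.

Lemma mem_dTV_component g h : h \in dTV_component g h.
Proof. by rewrite inE connect0. Qed.

Lemma dTV_component_le g h j : 0 <= g ->
  j \in dTV_component g h -> dTV L j h <= n%:R * g.
Proof.
move=> g0; rewrite inE dTVC => /connectP[q /shortenP[q' q'_path q'_uniq _] ->].
apply: le_trans (dTV_path_le q'_path) _; rewrite ler_wpM2r // ler_nat.
move/card_uniqP: q'_uniq => /= card_q'.
by rewrite ltnW // -card_q' -[X in (_ <= X)%N]card_ord max_card.
Qed.

Lemma dTV_component_sep g h i j :
  i \in dTV_component g h -> j \notin dTV_component g h -> g <= dTV L i j.
Proof.
rewrite !inE => hi; apply: contraNle => near_ij.
by apply: connect_trans hi (connect1 _).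
Qed.

Lemma trans_out_le (A : {set 'I_n}) (g : R) m i : 0 <= g ->
    (forall j k, j \in A -> k \notin A -> g <= dTV L j k) -> i \in A ->
  \sum_(j | j \notin A) trans L p m i j <=
    n%:R * ((p i)^-1 * expR (- (m%:R * g ^+ 2 / 2))).
Proof.
move=> g0 sepA iA; set K := (p i)^-1 * _.
have K_ge0 : 0 <= K by rewrite mulr_ge0 ?expR_ge0 // invr_ge0 ltW.
rewrite mulr_natl -[X in K *+ X]card_ord -sumr_const.
apply: (@le_trans _ _ (\sum_(j | j \notin A) K)); last exact: sumr_pred_le.
apply: ler_sum => j jA; apply: le_trans (trans_le_bhattacharyya m i j) _.
apply: ler_wpM2l; first by rewrite invr_ge0 ltW.
have beta_ge0 : 0 <= \sum_x Num.sqrt (L i x) * Num.sqrt (L j x).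
  by apply: sumr_ge0 => x _; rewrite mulr_ge0 ?sqrtr_ge0.
have := bhattacharyya_sqr_le (L_ge0 i) (L_ge0 j) (L_sum1 i) (L_sum1 j).
move=> /(expn_le_expR_sqr m beta_ge0) /le_trans; apply.
rewrite ler_expR lerN2 ler_pM2r //; apply: ler_wpM2l => //.
by rewrite lerXn2r ?nnegrE ?(dTV_ge0 i j) ?sepA.
Qed.

End IteratedLearning.

Lemma expR_sample_size_le (R : realType) (n s : nat) (C delta eps : R) (t : nat) :
    (0 < n)%N -> (0 < s)%N -> 0 <= C -> 0 < delta -> 0 < eps < 1 -> (0 < t)%N ->
  expR (- ((sample_size n s C delta eps t)%:R * (delta / n%:R) ^+ 2 / 2)) <=
    (eps / t%:R) ^+ 2 * expR (- C).
Proof.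
move=> n_gt0 s_gt0 C0 delta0 /andP[eps0 eps1] t_gt0.
set m := sample_size n s C delta eps t.
set K := 8 * s%:R * n%:R ^+ 2 / delta ^+ 2.
set lg := ln (t%:R / eps).
have t_ge1 : 1 <= t%:R :> R by rewrite ler1n.
have lg0 : 0 <= lg by rewrite ln_ge0 // ler_pdivlMr // mul1r (le_trans (ltW eps1)).
have K0 : 0 <= K by rewrite divr_ge0 ?sqr_ge0 // !mulr_ge0 ?sqr_ge0.
have m_ge : K * (lg + C) <= m%:R.
  rewrite /m /sample_size -/K -/lg natr_absz ger0_norm ?ceil_ge //.
  by rewrite ceil_ge0 (lt_le_trans (ltrN10 _)) // mulr_ge0 ?addr_ge0.
have -> : (eps / t%:R) ^+ 2 * expR (- C) = expR (- (2 * lg + C)).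
  rewrite opprD expRD -mulrN expRM_natl !expRN lnK ?invf_div //.
  by rewrite posrE divr_gt0 // ltr0n.
rewrite ler_expR lerN2.
have gK : (delta / n%:R) ^+ 2 * K = 8 * s%:R.
  by rewrite /K; field; rewrite pnatr_eq0 -lt0n n_gt0 gt_eqF.
have s_ge1 : 1 <= s%:R :> R by rewrite ler1n.
have lgC_le : lg + C <= s%:R * (lg + C) by rewrite ler_peMl ?addr_ge0.
apply: (@le_trans _ _ ((delta / n%:R) ^+ 2 * (K * (lg + C)) / 2)).
  by rewrite mulrA gK; lra.
by rewrite ler_pM2r // mulrC ler_wpM2r ?sqr_ge0.
Qed.

Lemma sum_sqr_div_expR_le (R : realType) (a eps : R) (t : nat) :
    0 <= a -> 0 <= eps <= 1 ->
  \sum_(u < t) a * ((eps / (u.+1)%:R) ^+ 2 * expR (- (2 * a))) <= eps.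
Proof.
move=> a0 /andP[eps0 eps1].
have aea : 2 * a * expR (- (2 * a)) <= 1.
  rewrite expRN ler_pdivrMr ?expR_gt0 // mul1r (le_trans _ (expR_ge1Dx _)) //.
  by rewrite lerDr.
rewrite (eq_bigr (fun u : 'I_t => a * eps ^+ 2 * expR (- (2 * a)) * ((u.+1)%:R ^+ 2)^-1));
  last by move=> u _; rewrite expr_div_n; ring.
rewrite -mulr_sumr; apply: le_trans (ler_wpM2l _ (sum_inv_sqr_le _ t)) _.
  by rewrite !mulr_ge0 ?expR_ge0 ?sqr_ge0.
rewrite (_ : _ * 2 = 2 * a * expR (- (2 * a)) * eps ^+ 2); last by ring.
apply: (@le_trans _ _ (1 * eps ^+ 2)); first by rewrite ler_wpM2r ?sqr_ge0.
by rewrite mul1r expr2 ler_piMl.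
Qed.

Unset Implicit Arguments.

Theorem theorem2 (R : realType) (n s : nat) (L : 'I_n -> 'I_s -> R)
    (p : 'I_n -> R) (h1 : 'I_n)
    (HL0 : forall i x, 0 <= L i x)
    (HL1 : forall i, \sum_(x < s) L i x = 1)
    (Hdist : forall i j, i != j -> L i <> L j)
    (Hp0 : forall i, 0 < p i)
    (Hp1 : \sum_(i < n) p i = 1) :
  exists C : R, 0 < C /\
    forall delta eps : R, 0 < delta < 1 -> 0 < eps < 1 ->
    forall t : nat, (1 <= t)%N ->
      \sum_(i < n | dTV L i h1 <= delta)
         hpost L p h1 (sample_size n s C delta eps) t i >= 1 - eps.
Proof.
have n_gt0 : (0 < n)%N by case: n h1 {L HL0 HL1 Hdist p Hp0 Hp1} => [[]|].
have s_gt0 : (0 < s)%N.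
  move: (HL1 h1); case: s L {HL0 HL1 Hdist} => // L.
  by rewrite big_ord0 => /eqP; rewrite eq_sym oner_eq0.
pose Q := \sum_k (p k)^-1; pose C := 2 * (n%:R * Q).
have inv_p_le k : (p k)^-1 <= Q.
  by rewrite [leRHS](bigD1 k) //= lerDl sumr_ge0 // => i _; rewrite invr_ge0 ltW.
have Q_gt0 : 0 < Q by rewrite (lt_le_trans _ (inv_p_le h1)) ?invr_gt0.
have C_gt0 : 0 < C by rewrite !mulr_gt0 ?ltr0n.
exists C; split => // delta eps /andP[delta_gt0 _] /andP[eps_gt0 eps_lt1] t _.
pose g := delta / n%:R.
have g_ge0 : 0 <= g := divr_ge0 (ltW delta_gt0) (ler0n _ _).
pose c u := n%:R * Q * ((eps / (u.+1)%:R) ^+ 2 * expR (- C)).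
apply: le_trans _ (hpost_mass_ge HL0 HL1 Hp0 (c := c) t (mem_dTV_component L g h1) _ _)
  => [|i iA|u i iA].
- apply: lerB => //; apply: sum_sqr_div_expR_le; last by rewrite !ltW.
  by rewrite mulr_ge0 // ltW.
- apply: le_trans (dTV_component_le g_ge0 iA) _.
  by rewrite /g mulrC divfK // pnatr_eq0 -lt0n.
apply: le_trans (trans_out_le HL0 HL1 Hp0 Hp1 _ g_ge0 _ iA) _ => [j k|].
  exact: dTV_component_sep.
rewrite /c -[n%:R * Q * _]mulrA; apply: ler_wpM2l => //.
apply: ler_pM => //; first by rewrite invr_ge0 ltW.
by apply: expR_sample_size_le; rewrite ?eps_gt0 ?eps_lt1 ?(ltW C_gt0).
Qed.
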